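(* Let $r\in\mathbb Z_+$, $\mathfrak B$ a finite-dimensional Banach space, $\mathcal C$ the space of functions $[-r,0]\cap\mathbb Z\to\mathfrak B$ with norm $\|\varphi\|=\sum_{k=0}^r|\varphi(-k)|$, $A:\mathbb Z\to\mathfrak A$ and $f:\mathbb Z\to\mathfrak B$. Let $\psi(t,u,(A,f))$ be a solution of $u(t+1)=A(t)u_t+f(t)$ whose values $\{\psi(t,u,(A,f)):t\in\mathbb Z_+\}$ form a relatively compact set. Then the set $$H^+(u,(A,f)):=\overline{\{(\tilde\psi(\tau,u,(A,f)),(A_\tau,f_\tau)):\ \tau\ge0\}}\subseteq X:=\mathcal C\times H(A,f)$$ is conditionally compact with respect to $(X,h,Y)$, where $Y:=H(A,f)$ and $h:=pr_2:X\to Y$.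
   Context: $\mathfrak A$ is the Banach space of linear operators $\mathcal C\to\mathfrak B$ with operator norm; $C(\mathbb Z,\cdot)$ carries the topology of pointwise (compact-open) convergence. For a function $u$ and integer $t$, $u_t\in\mathcal C$ is $u_t(s)=u(t+s)$, $s\in[-r,0]$. $\psi(t,u,(A,f))$ denotes the solution defined for $t\ge-r$ with $\psi(s)=u(s)$ on $[-r,0]$, and $\tilde\psi(t,u,(A,f))\in\mathcal C$ is $\tilde\psi(t,u,(A,f))(s):=\psi(t+s,u,(A,f))$. $A_\tau(t)=A(t+\tau)$, $f_\tau(t)=f(t+\tau)$, and $H(A,f)$ is the closure of $\{(A_\tau,f_\tau):\tau\in\mathbb Z\}$ in $C(\mathbb Z,\mathfrak A)\times C(\mathbb Z,\mathfrak B)$. A subset $M\subseteq X$ is conditionally compact w.r.t. $(X,h,Y)$ if it is closed and $h^{-1}(Y')\cap M$ is relatively compact for every relatively compact $Y'\subseteq Y$. *)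

From HB Require Import structures.
From mathcomp Require Import all_boot all_order all_algebra.
From mathcomp Require Import all_classical all_reals all_analysis.
Set Implicit Arguments. Unset Strict Implicit. Unset Printing Implicit Defensive.
Import Order.TTheory GRing.Theory Num.Theory.
Import numFieldNormedType.Exports.
Local Open Scope classical_set_scope.
Local Open Scope ring_scope.

(* The finite-dimensional Banach space B is 'rV[R]_n.
   The phase space C = functions [-r,0] ∩ Z -> B is 'I_r.+1 -> 'rV[R]_n,
   where index k : 'I_r.+1 stands for the point -k (product topology,
   equal to the topology of the norm sum_k |phi(-k)|).
   A linear operator C -> B (element of the space 𝔄) is represented by its
   r.+1 block matrices: a : 'I_r.+1 -> 'M[R]_n acts by phi |-> sum_k phi k *m a k
   (the entrywise topology equals the operator-norm topology, finite dim). *)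
Notation Csp R n r := {ptws 'I_r.+1 -> 'rV[R]_n}.
Notation Aop R n r := {ptws 'I_r.+1 -> 'M[R]_n}.
(* C(Z,𝔄) and C(Z,B) with pointwise (= compact-open, Z discrete) topology *)
Notation AZ R n r := {ptws int -> Aop R n r}.
Notation BZ R n := {ptws int -> 'rV[R]_n}.

Definition opapp (R : realType) (n r : nat) (a : Aop R n r) (phi : Csp R n r)
  : 'rV[R]_n := \sum_(k < r.+1) (phi k *m a k).

Definition seg (R : realType) (n r : nat) (u : int -> 'rV[R]_n) (t : int)
  : Csp R n r := fun k => u (t - (nat_of_ord k)%:Z).

Definition shift (T : Type) (g : {ptws int -> T}) (tau : int) : {ptws int -> T} :=
  fun t => g (t + tau).

Definition hull (R : realType) (n r : nat) (A : AZ R n r)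
  (f : BZ R n) : set (AZ R n r * BZ R n) :=
  closure (range (fun tau : int => (shift A tau, shift f tau))).

Definition closure_in (T : topologicalType) (S E : set T) : set T :=
  closure E `&` S.

Definition rel_compact_in (T : topologicalType) (S E : set T) : Prop :=
  E `<=` S /\ compact (closure_in S E).

Definition cond_compact (T U : topologicalType) (X : set T) (Y : set U)
  (h : T -> U) (M : set T) : Prop :=
  [/\ M `<=` X, closure_in X M = M &
      forall Y' : set U, rel_compact_in Y Y' ->
        rel_compact_in X ((h @^-1` Y') `&` M)].

Definition is_solution (R : realType) (n r : nat) (A : AZ R n r)
  (f : BZ R n) (u : Csp R n r) (psi : int -> 'rV[R]_n) : Prop :=
  (forall k : 'I_r.+1, psi (- (nat_of_ord k)%:Z) = u k) /\
  (forall t : int, 0 <= t -> psi (t + 1) = opapp (A t) (@seg R n r psi t) + f t).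

Definition Xset (R : realType) (n r : nat) (A : AZ R n r)
  (f : BZ R n) :
  set (Csp R n r * (AZ R n r * BZ R n)) :=
  [set x | hull A f x.2].

Definition Hplus (R : realType) (n r : nat) (A : AZ R n r)
  (f : BZ R n) (psi : int -> 'rV[R]_n) :
  set (Csp R n r * (AZ R n r * BZ R n)) :=
  closure_in (Xset A f)
    [set (@seg R n r psi tau, (shift A tau, shift f tau)) | tau in [set tau : int | 0 <= tau]].

From HB Require Import structures.
From mathcomp Require Import all_boot all_order all_algebra.
From mathcomp Require Import all_classical all_reals all_analysis.
Import Order.TTheory GRing.Theory Num.Theory.
Import numFieldNormedType.Exports.
Local Open Scope classical_set_scope.
Local Open Scope ring_scope.

(* For tau >= 0 the segment psi_tau only takes values psi(t), t >= 0, or values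
   of the initial function u, so H^+ lies over the box K^(r+1), where K is the
   closure of the positive orbit of psi together with the finitely many values
   of u; K^(r+1) is compact by Tychonoff.  Over a relatively compact Y' of the
   hull, (h^-1 Y') ∩ H^+ is thus a closed subset of the compact product of that
   box with the closure of Y'. *)

Lemma closure_sub_closed {T : topologicalType} {A B : set T} :
  closed B -> A `<=` B -> closure A `<=` B.
Proof. by move=> cB AB x; rewrite closureE; apply; split. Qed.

Lemma closure_inK (T : topologicalType) (S E : set T) :
  closure_in S (closure_in S E) = closure_in S E.
Proof.
apply/seteqP; split=> x [clx Sx]; split=> //.
  by apply: closure_sub_closed _ _ _ clx; [exact: closed_closure | move=> y []].
exact: subset_closure.
Qed.

Section ProductOverBase.
Context {T U : topologicalType}.

Lemma closed_preimage_fst {P : set T} : closed P -> closed (@fst T U @^-1` P).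
Proof. by move=> cP; apply: preimage_closed cP => x _; exact: cvg_fst. Qed.

Lemma closed_preimage_snd {Q : set U} : closed Q -> closed (@snd T U @^-1` Q).
Proof. by move=> cQ; apply: preimage_closed cQ => x _; exact: cvg_snd. Qed.

Lemma closed_setX (P : set T) (Q : set U) :
  closed P -> closed Q -> closed (P `*` Q).
Proof.
by move=> cP cQ; apply: closedI; [exact: closed_preimage_fst | exact: closed_preimage_snd].
Qed.

Context {Y : set U} {P : set T} {E : set (T * U)}.
Hypotheses (Y_closed : closed Y) (P_compact : compact P) (P_closed : closed P)
  (E_over_P : E `<=` fst @^-1` P).

Lemma rel_compact_in_fiber (Y' : set U) : rel_compact_in Y Y' ->
  rel_compact_in (snd @^-1` Y) ((snd @^-1` Y') `&` closure_in (snd @^-1` Y) E).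
Proof.
move=> [_ Y'_compact]; split; first by move=> x [_ []].
have box_closed : closed (P `*` closure_in Y Y').
  by apply: closed_setX => //; apply: closedI => //; exact: closed_closure.
apply: (subclosed_compact _ (compact_setX P_compact Y'_compact)).
  by apply: closedI; [exact: closed_closure | exact: closed_preimage_snd].
move=> x [+ _]; apply: closure_sub_closed box_closed _ x => y [Y'y [cly Yy]].
split; last by split=> //; exact: subset_closure.
exact: closure_sub_closed (closed_preimage_fst P_closed) E_over_P _ cly.
Qed.

Lemma cond_compact_closure_in :
  cond_compact (snd @^-1` Y) Y snd (closure_in (snd @^-1` Y) E).
Proof.
split; [by move=> x [] | exact: closure_inK | exact: rel_compact_in_fiber].
Qed.

End ProductOverBase.

Lemma compact_ptws_box (I : eqType) (T : topologicalType) (K : set T) :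
  compact K -> compact [set g : {ptws I -> T} | forall i, K (g i)].
Proof. by move=> K_compact; exact: (@tychonoff I (fun _ => T) (fun _ => K)). Qed.

Lemma closed_ptws_box (I : eqType) (T : topologicalType) (K : set T) :
  hausdorff_space T -> compact K ->
  closed [set g : {ptws I -> T} | forall i, K (g i)].
Proof.
move=> T_sep K_compact; apply: compact_closed; last exact: compact_ptws_box.
by apply: hausdorff_product => _.
Qed.

Lemma seg_nonneg {R : realType} {n r : nat} {u : Csp R n r}
    {psi : int -> 'rV[R]_n} {tau : int} :
  (forall k : 'I_r.+1, psi (- (nat_of_ord k)%:Z) = u k) -> 0 <= tau ->
  forall k : 'I_r.+1,
  ([set psi t | t in [set t : int | 0 <= t]] `|` range u) (@seg R n r psi tau k).
Proof.
move=> psi_init; case: tau => [m|//] _ k; rewrite /seg.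
have [km|mk] := leqP k m.
  by left; exists (m%:Z - k%:Z) => //=; rewrite subr_ge0 lez_nat.
have k_m_lt : (k - m < r.+1)%N by exact: leq_ltn_trans (leq_subr _ _) (ltn_ord k).
right; exists (Ordinal k_m_lt) => //.
by rewrite -psi_init /= -subzn ?opprB // ltnW.
Qed.

Theorem lemmal04p3 (R : realType) (n r : nat)
  (A : AZ R n r) (f : BZ R n) (u : Csp R n r)
  (psi : int -> 'rV[R]_n) :
  is_solution A f u psi ->
  compact (closure [set psi t | t in [set t : int | 0 <= t]]) ->
  cond_compact (Xset A f) (hull A f) snd (Hplus A f psi).
Proof.
move=> [psi_init _] orbit_compact.
set K := closure [set psi t | t in [set t : int | 0 <= t]] `|` range u.
have K_compact : compact K.
  by apply: compactU orbit_compact _; apply/finite_compact/finite_image.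
have box_compact := @compact_ptws_box 'I_r.+1 _ _ K_compact.
have box_closed := @closed_ptws_box 'I_r.+1 _ _ (@norm_hausdorff _ 'rV[R]_n) K_compact.
have hull_closed : closed (hull A f) by exact: closed_closure.
apply: (cond_compact_closure_in hull_closed box_compact box_closed).
move=> _ [tau tau_ge0 <-] k /=.
by case: (seg_nonneg psi_init tau_ge0 k) => [?|?]; [left; exact: subset_closure | right].
Qed.
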